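(* Let $\tau$ be a continuous distributive triangle function on $\Delta^+$, $\Sigma$ a $\sigma$-ring of subsets of a non-empty set $\Omega$, $\gamma$ a $\tau$-decomposable measure on $\Sigma$ that is continuous from below, and $f:\Omega\to[0,+\infty]$ a measurable function that is $\gamma$-integrable on $E\in\Sigma$. Then there exists a non-decreasing sequence $(f_n)_{n\ge1}$ of functions in $\mathcal{S}_{f,E}$ converging pointwise to $f$ such that $\int_E f\,d\gamma=\lim_{n\to\infty}\int_E f_n\,d\gamma$ (weak limit in $\Delta^+$).
   Context: $\Delta^+$ is the set of functions $F:[-\infty,+\infty]\to[0,1]$ that are non-decreasing, left-continuous on $\mathbb{R}$, with $F(x)=0$ for $x\le0$ and $F(+\infty)=1$, ordered pointwise; $\varepsilon_a(x)=1$ if $x>a$, else $0$. A triangle function is a symmetric, associative map $\tau:\Delta^+\times\Delta^+\to\Delta^+$, non-decreasing in each variable, with identity $\varepsilon_0$; $G\oplus H=\tau(G,H)$, $\bigoplus_{k=1}^nG_k=\tau(G_1,\bigoplus_{k=2}^nG_k)$. For $c\ge0$, $c\odot G=\varepsilon_0$ if $c=0$, $(c\odot G)(x)=G(x/c)$ if $c>0$; $\tau$ is distributive if $c\odot(G\oplus H)=(c\odot G)\oplus(c\odot H)$ for all $c\ge0$, $G,H$. Convergence in $\Delta^+$ is weak convergence ($G_n(x)\to G(x)$ at every continuity point $x\in\mathbb{R}$ of $G$); $\tau$ is continuous if continuous for this convergence. A $\tau$-decomposable measure on a ring $\Sigma$ is $\gamma:\Sigma\to\Delta^+$ with $\gamma_\emptyset=\varepsilon_0$,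 $\gamma_{E\cup F}=\tau(\gamma_E,\gamma_F)$ for disjoint $E,F$; continuous from below means $\gamma_{E_n}\to\gamma_E$ whenever $E_n\subseteq E_{n+1}$, $\bigcup E_n=E$ in $\Sigma$. A simple function is $\sum_{i=1}^nx_i\chi_{E_i}$, $x_i\in[0,\infty)$, $E_i\in\Sigma$ pairwise disjoint, with $\int_E f\,d\gamma=\bigoplus_{i=1}^nx_i\odot\gamma_{E\cap E_i}$. Measurable: pointwise limit of simple functions. $\mathcal{S}_{f,E}$: simple $\mathfrak f$ with $\mathfrak f\le f$ on $E$. $f$ is $\gamma$-integrable on $E$ if some $H\in\Delta^+$ satisfies $\int_E\mathfrak f\,d\gamma\ge H$ for all $\mathfrak f\in\mathcal S_{f,E}$; then $\int_Ef\,d\gamma=\inf\{\int_E\mathfrak f\,d\gamma:\mathfrak f\in\mathcal S_{f,E}\}$ in $(\Delta^+,\le)$ (left-continuous regularization of the pointwise infimum). *)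

From HB Require Import structures.
From mathcomp Require Import all_boot all_order all_algebra.
From mathcomp Require Import all_classical all_reals all_analysis.
Set Implicit Arguments. Unset Strict Implicit. Unset Printing Implicit Defensive.
Import Order.TTheory GRing.Theory Num.Theory.
Import numFieldNormedType.Exports.
Local Open Scope classical_set_scope.
Local Open Scope ring_scope.

Section DeltaPlus.
Variable R : realType.

Definition dfun := \bar R -> R.

Definition delta_plus (F : dfun) : Prop :=
  [/\ (forall x, 0 <= F x <= 1),
      (forall x y : \bar R, (x <= y)%E -> F x <= F y),
      (forall x : R, (fun y : R => F y%:E) @ x^'- --> F x%:E),
      (forall x : \bar R, (x <= 0)%E -> F x = 0) &
      F +oo%E = 1].

Definition dle (F G : dfun) : Prop := forall x, F x <= G x.

Definition eps (a : R) : dfun := fun x => if (a%:E < x)%E then 1 else 0.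

Definition dscal (c : R) (G : dfun) : dfun :=
  if c == 0 then eps 0 else fun x => G (x * (c^-1)%:E)%E.

Definition wconv (Gn : nat -> dfun) (G : dfun) : Prop :=
  forall x : R, {for x, continuous (fun y : R => G y%:E)} ->
    (fun n => Gn n x%:E) @ \oo --> G x%:E.

Definition triangle_function (tau : dfun -> dfun -> dfun) : Prop :=
  [/\ (forall G H, delta_plus G -> delta_plus H -> delta_plus (tau G H)),
      (forall G H, delta_plus G -> delta_plus H -> tau G H = tau H G),
      (forall G H K, delta_plus G -> delta_plus H -> delta_plus K ->
         tau G (tau H K) = tau (tau G H) K),
      (forall G G' H, delta_plus G -> delta_plus G' -> delta_plus H ->
         dle G G' -> dle (tau G H) (tau G' H) /\ dle (tau H G) (tau H G')) &
      (forall G, delta_plus G -> tau G (eps 0) = G)].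

Definition distributive_tf (tau : dfun -> dfun -> dfun) : Prop :=
  forall c G H, 0 <= c -> delta_plus G -> delta_plus H ->
    dscal c (tau G H) = tau (dscal c G) (dscal c H).

Definition continuous_tf (tau : dfun -> dfun -> dfun) : Prop :=
  forall (Gn Hn : nat -> dfun) G H,
    (forall n, delta_plus (Gn n)) -> (forall n, delta_plus (Hn n)) ->
    delta_plus G -> delta_plus H ->
    wconv Gn G -> wconv Hn H -> wconv (fun n => tau (Gn n) (Hn n)) (tau G H).

Definition dbig (tau : dfun -> dfun -> dfun) (s : seq dfun) : dfun :=
  foldr tau (eps 0) s.

End DeltaPlus.

Section Measures.
Variables (R : realType) (Omega : Type).

Definition sigma_ring_of (S : set (set Omega)) : Prop :=
  [/\ S set0,
      (forall A B, S A -> S B -> S (A `\` B)) &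
      (forall F : nat -> set Omega, (forall n, S (F n)) -> S (\bigcup_n F n))].

Definition tau_decomposable (tau : dfun R -> dfun R -> dfun R)
    (S : set (set Omega)) (gamma : set Omega -> dfun R) : Prop :=
  [/\ (forall A, S A -> delta_plus (gamma A)),
      gamma set0 = eps 0 &
      (forall A B, S A -> S B -> A `&` B = set0 ->
         gamma (A `|` B) = tau (gamma A) (gamma B))].

Definition cont_from_below (S : set (set Omega))
    (gamma : set Omega -> dfun R) : Prop :=
  forall (En : nat -> set Omega) E, (forall n, S (En n)) -> S E ->
    (forall n, En n `<=` En n.+1) -> \bigcup_n En n = E ->
    wconv (fun n => gamma (En n)) (gamma E).

(* A simple function given by a representation [:: (x_1,E_1); ...; (x_n,E_n)] *)
Definition simple_rep (S : set (set Omega)) (s : seq (R * set Omega)) : Prop :=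
  [/\ (forall p, p \in s -> 0 <= p.1),
      (forall p, p \in s -> S p.2) &
      (forall i j, (i < j < size s)%N ->
         (nth (0, set0) s i).2 `&` (nth (0, set0) s j).2 = set0)].

Definition sfval (s : seq (R * set Omega)) (w : Omega) : \bar R :=
  (\sum_(p <- s) p.1 * \1_(p.2) w)%:E.

Definition sint (tau : dfun R -> dfun R -> dfun R)
    (gamma : set Omega -> dfun R) (E : set Omega) (s : seq (R * set Omega)) : dfun R :=
  dbig tau [seq dscal p.1 (gamma (E `&` p.2)) | p <- s].

Definition SfE (S : set (set Omega)) (f : Omega -> \bar R) (E : set Omega) :
    set (seq (R * set Omega)) :=
  [set s | simple_rep S s /\ forall w, E w -> (sfval s w <= f w)%E].

Definition measurable_fn (S : set (set Omega)) (f : Omega -> \bar R) : Prop :=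
  exists sn : nat -> seq (R * set Omega), (forall n, simple_rep S (sn n)) /\
    forall w, (fun n => sfval (sn n) w) @ \oo --> f w.

Definition gamma_integrable (tau : dfun R -> dfun R -> dfun R) (S : set (set Omega))
    (gamma : set Omega -> dfun R) (f : Omega -> \bar R) (E : set Omega) : Prop :=
  exists H, delta_plus H /\ forall s, SfE S f E s -> dle H (sint tau gamma E s).

(* int_E f dgamma := inf in (Delta^+, <=) of the simple integrals:
   left-continuous regularization of the pointwise infimum. *)
Definition pinf (tau : dfun R -> dfun R -> dfun R) (S : set (set Omega))
    (gamma : set Omega -> dfun R) (f : Omega -> \bar R) (E : set Omega) (x : \bar R) : R :=
  inf [set sint tau gamma E s x | s in SfE S f E].

Definition tf_integral (tau : dfun R -> dfun R -> dfun R) (S : set (set Omega))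
    (gamma : set Omega -> dfun R) (f : Omega -> \bar R) (E : set Omega) : dfun R :=
  fun x => match x with
  | EFin r => sup [set pinf tau S gamma f E y%:E | y in [set y : R | y < r]]
  | +oo%E => 1
  | -oo%E => 0
  end.

End Measures.

From HB Require Import structures.
From mathcomp Require Import all_boot all_order all_algebra.
From mathcomp Require Import all_classical all_reals all_analysis.
From mathcomp Require Import lra.
Import Order.TTheory GRing.Theory Num.Theory.
Import numFieldNormedType.Exports.
Set Implicit Arguments. Unset Strict Implicit. Unset Printing Implicit Defensive.
Local Open Scope classical_set_scope.
Local Open Scope ring_scope.

(** For each rational [q] and each [m], choose a simple function [s_(q,m)]
   below [f] on [E] whose integral at [q] lies within [1/(m+1)] of the
   pointwise infimum [pinf q].  The [n]-th approximant takes at [w] the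
   largest value below [f w] among the first [n] rationals and the values of
   the first [n] chosen functions: it is non-decreasing in [n], tends to [f]
   since every rational eventually occurs, and eventually dominates each
   [s_(q,m)].  As the integral of simple functions is antitone in the
   integrand, for [x <= q] its integral at [x] eventually lies between
   [pinf x] and [pinf q + 1/(m+1)], which forces weak convergence to the
   left-continuous regularization of [pinf]. *)

Section DeltaPlus.
Variable R : realType.
Implicit Types (G : dfun R) (c d : R).

Lemma delta_plus_eps0 : delta_plus (eps (0 : R)).
Proof.
rewrite /eps; split.
- by move=> x; case: ifP => _; rewrite lexx ?ler01.
- move=> x y hxy; case: ifP => h1; case: ifP => h2 //; rewrite ?ler01 //.
  by move: (lt_le_trans h1 hxy); rewrite h2.
- move=> x; apply: cvg_near_cst; have [x0|x0] := ltP 0 x.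
    near=> y; rewrite !lte_fin x0; suff -> : 0 < y by [].
    by near: y; exact: nbhs_left_gt.
  near=> y; have yx : y <= x by near: y; exact: nbhs_left_le.
  by rewrite !lte_fin (ltNge 0 x) x0 (ltNge 0 y) (le_trans yx x0).
- by move=> x x0; case: ifP => // h; have := lt_le_trans h x0; rewrite ltxx.
- by rewrite ltry.
Unshelve. all: end_near. Qed.

Section DeltaPlusFacts.
Variable G : dfun R.
Hypothesis hG : delta_plus G.

Lemma delta_plus_ge0 x : 0 <= G x.
Proof. by case: hG => h *; have /andP[] := h x. Qed.

Lemma delta_plus_le1 x : G x <= 1.
Proof. by case: hG => h *; have /andP[] := h x. Qed.

Lemma delta_plus_nondecreasing x y : (x <= y)%E -> G x <= G y.
Proof. by case: hG => _ h *; apply: h. Qed.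

Lemma delta_plus_nonpos x : (x <= 0)%E -> G x = 0.
Proof. by case: hG => _ _ _ h *; apply: h. Qed.

Lemma dle_eps0 : dle G (eps 0).
Proof.
move=> x; rewrite /eps; case: ifP => h; first exact: delta_plus_le1.
by rewrite delta_plus_nonpos // leNgt h.
Qed.

End DeltaPlusFacts.

Lemma dscal0 G : dscal 0 G = eps 0.
Proof. by rewrite /dscal eqxx. Qed.

Lemma dscal_gt0 c G : 0 < c -> dscal c G = fun x => G (x * (c^-1)%:E)%E.
Proof. by move=> c0; rewrite /dscal gt_eqF. Qed.

Lemma delta_plus_dscal c G : 0 <= c -> delta_plus G -> delta_plus (dscal c G).
Proof.
rewrite le_eqVlt => /predU1P[<-|c0] hG; first by rewrite dscal0; exact: delta_plus_eps0.
have ic0 : (0 <= (c^-1)%:E)%E by rewrite lee_fin invr_ge0 ltW.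
rewrite dscal_gt0 //; split.
- by move=> x; rewrite delta_plus_ge0 ?delta_plus_le1.
- by move=> x y hxy; apply: delta_plus_nondecreasing => //; exact: lee_wpmul2r.
- move=> x; rewrite -EFinM.
  have -> : (fun y : R => G (y%:E * (c^-1)%:E)%E) = (fun y => G (y / c)%:E).
    by apply: funext => y; rewrite -EFinM.
  case: hG => _ _ hleft _ _; have /cvg_at_leftP hseq := hleft (x / c).
  apply/cvg_at_leftP => u [hu hcu]; apply: (hseq (fun n => u n / c)); split.
  + by move=> n; rewrite ltr_pM2r // invr_gt0.
  + exact: cvgMr_tmp.
- by move=> x x0; apply: delta_plus_nonpos => //; exact: mule_le0_ge0.
- by rewrite gt0_mulye ?lte_fin ?invr_gt0 //; case: hG.
Qed.

Lemma dscal_eps0 c : 0 <= c -> dscal c (eps 0) = eps 0.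
Proof.
rewrite le_eqVlt => /predU1P[<-|c0]; first by rewrite dscal0.
by rewrite dscal_gt0 //; apply: funext => x; rewrite /eps lte_pdivlMr // mul0e.
Qed.

Lemma dle_dscal c d G : 0 <= c -> c <= d -> delta_plus G ->
  dle (dscal d G) (dscal c G).
Proof.
rewrite le_eqVlt => /predU1P[<-|c0] cd hG.
  by rewrite dscal0; apply: dle_eps0; exact: delta_plus_dscal.
have d0 : 0 < d by exact: lt_le_trans cd.
rewrite !dscal_gt0 // => -[r| |] /=.
- rewrite -!EFinM; have [r0|r0] := leP 0 r.
    by apply: delta_plus_nondecreasing; rewrite // lee_fin ler_wpM2l // lef_pV2.
  rewrite (delta_plus_nonpos hG) ?delta_plus_ge0 // lee_fin.
  by rewrite mulr_le0_ge0 ?invr_ge0 ?ltW.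
- by rewrite !gt0_mulye ?lte_fin ?invr_gt0.
- by rewrite !gt0_mulNye ?lte_fin ?invr_gt0.
Qed.

End DeltaPlus.

Section SimpleFunctions.
Variables (R : realType) (Omega : Type) (S : set (set Omega)).
Hypothesis hS : sigma_ring_of S.
Local Notation srep := (@simple_rep R Omega S).
Implicit Types (s t : seq (R * set Omega)) (A B : set Omega).

Lemma sigma_ring0 : S set0.
Proof. by case: hS. Qed.

Lemma sigma_ringD A B : S A -> S B -> S (A `\` B).
Proof. by case: hS => _ h _; apply: h. Qed.

Lemma sigma_ringI A B : S A -> S B -> S (A `&` B).
Proof.
move=> hA hB; rewrite -setDD; exact/sigma_ringD/sigma_ringD.
Qed.

Lemma sigma_ring_bigcup (F : nat -> set Omega) :
  (forall n, S (F n)) -> S (\bigcup_n F n).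
Proof. by case: hS => _ _ h; apply: h. Qed.

Lemma sigma_ringU A B : S A -> S B -> S (A `|` B).
Proof.
move=> hA hB; rewrite -bigcup2E; apply: sigma_ring_bigcup => -[|[|n]] //=.
exact: sigma_ring0.
Qed.

Lemma sigma_ring_bigcap (F : nat -> set Omega) :
  (forall n, S (F n)) -> S (\bigcap_n F n).
Proof.
move=> hF; have -> : \bigcap_n F n = F 0%N `\` \bigcup_n (F 0%N `\` F n).
  apply/seteqP; split=> w /=.
    by move=> h; split; [exact: h | case=> n _ [] _; apply; exact: h].
  by case=> h0 h n _; apply: contrapT => hn; apply: h; exists n.
by apply: sigma_ringD => //; apply: sigma_ring_bigcup => n; exact: sigma_ringD.
Qed.

Lemma simple_rep_nil : srep [::].
Proof. by split=> // i j; rewrite andbF. Qed.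

Lemma simple_rep_cons x A s : srep ((x, A) :: s) <->
  [/\ 0 <= x, S A, (forall p, p \in s -> A `&` p.2 = set0) & srep s].
Proof.
split=> [[h1 h2 h3]|[x0 hA hdisj [k1 k2 k3]]].
  split.
  - by apply: (h1 (x, A)); rewrite mem_head.
  - by apply: (h2 (x, A)); rewrite mem_head.
  - by move=> p /(nthP (0, set0)) [j hj <-]; exact: (h3 0%N j.+1).
  - split=> [p hp|p hp|i j hij]; last exact: (h3 i.+1 j.+1).
    + by apply: h1; rewrite in_cons hp orbT.
    + by apply: h2; rewrite in_cons hp orbT.
split.
- by move=> p; rewrite in_cons => /predU1P[->|/k1].
- by move=> p; rewrite in_cons => /predU1P[->|/k2].
- move=> [|i] [|j] //=; last by rewrite !ltnS; exact: k3.
  by rewrite ltnS => hj; apply: hdisj; exact: mem_nth.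
Qed.

Lemma simple_rep_map_setD s B : srep s -> S B ->
  srep (map (fun p => (p.1, p.2 `\` B)) s).
Proof.
move=> + hB; elim: s => [|[x A] s IH] /=; first by move=> _; exact: simple_rep_nil.
move/simple_rep_cons => [x0 hA hdisj hs]; apply/simple_rep_cons; split => //.
- exact: sigma_ringD.
- move=> _ /mapP[q hq ->] /=; rewrite -subset0 => w [[Aw _] [qw _]].
  by rewrite -(hdisj q hq); split.
- exact: IH.
Qed.

Lemma sfval_nil w : sfval (R:=R) (Omega:=Omega) [::] w = 0%E.
Proof. by rewrite /sfval big_nil. Qed.

Lemma sfval_cons x A s w :
  sfval ((x, A) :: s) w = ((x * \1_A w)%:E + sfval s w)%E.
Proof. by rewrite /sfval big_cons EFinD. Qed.

Lemma sfval_eq0 s w : (forall p, p \in s -> ~ p.2 w) -> sfval s w = 0%E.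
Proof.
move=> h; rewrite /sfval big_seq big1 // => p hp.
by rewrite indicE memNset ?mulr0 //; exact: h.
Qed.

Lemma sfval_cons_notin x A s w : ~ A w -> sfval ((x, A) :: s) w = sfval s w.
Proof. by move=> Aw; rewrite sfval_cons indicE memNset // mulr0 add0e. Qed.

Lemma sfval_cons_in x A s w : srep ((x, A) :: s) -> A w ->
  sfval ((x, A) :: s) w = x%:E.
Proof.
move/simple_rep_cons => [_ _ hdisj _] Aw.
rewrite sfval_cons sfval_eq0 ?indicE ?mem_set ?mulr1 ?adde0 // => p hp pw.
by rewrite -[False]/(set0 w) -(hdisj p hp).
Qed.

Lemma sfvalP s w : srep s ->
  ((forall p, p \in s -> ~ p.2 w) /\ sfval s w = 0%E) \/
  (exists p, [/\ p \in s, p.2 w & sfval s w = p.1%:E]).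
Proof.
elim: s => [|[x A] s IH]; first by move=> _; left; split => //; exact: sfval_eq0.
move=> hxs; have /simple_rep_cons [_ _ _ hs] := hxs.
have [Aw|Aw] := pselect (A w).
  by right; exists (x, A); rewrite mem_head sfval_cons_in.
rewrite sfval_cons_notin //; case: (IH hs) => [[h ->]|[p [hp pw ->]]].
  by left; split=> // p; rewrite in_cons => /predU1P[->|/h].
by right; exists p; rewrite in_cons hp orbT.
Qed.

Lemma sfval_map_setD s B w : ~ B w ->
  sfval (map (fun p => (p.1, p.2 `\` B)) s) w = sfval s w.
Proof.
move=> Bw; rewrite /sfval big_map; congr (_%:E); apply: eq_bigr => p _ /=.
rewrite !indicE; have [pw|pw] := pselect (p.2 w); first by rewrite !mem_set.
by rewrite !memNset // => -[].
Qed.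

Lemma sigma_ring_sfval_gt s c : srep s -> 0 <= c ->
  S [set w | (c%:E < sfval s w)%E].
Proof.
move=> + c0; elim: s => [|[x A] s IH] hxs.
  suff -> : [set w : Omega | (c%:E < sfval [::] w)%E] = set0 by exact: sigma_ring0.
  by apply/seteqP; split=> w //=; rewrite sfval_nil lte_fin ltNge c0.
have /simple_rep_cons [_ hA hdisj hs] := hxs.
have -> : [set w | (c%:E < sfval ((x, A) :: s) w)%E] =
    (if c < x then A else set0) `|` ([set w | (c%:E < sfval s w)%E] `\` A).
  apply/seteqP; split=> w /=; have [Aw|Aw] := pselect (A w).
  - by rewrite sfval_cons_in // lte_fin; case: ifP => _ h; [left|].
  - by rewrite sfval_cons_notin // => h; right.
  - by rewrite sfval_cons_in // lte_fin; case: ifP => // _ [] // [].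
  - by rewrite sfval_cons_notin //; case: ifP => _ [] // [].
apply: sigma_ringU; last exact/sigma_ringD/hA/IH.
by case: ifP => _; [exact: hA | exact: sigma_ring0].
Qed.

Section Integral.
Variables (tau : dfun R -> dfun R -> dfun R) (gamma : set Omega -> dfun R).
Hypotheses (htau : triangle_function tau) (hdist : distributive_tf tau)
  (hgam : tau_decomposable tau S gamma).
Local Notation dp := (@delta_plus R).
Local Notation sint := (@sint R Omega tau gamma).
Implicit Types (G H K L : dfun R).

Lemma delta_plus_tau G H : dp G -> dp H -> dp (tau G H).
Proof. by case: htau => h *; exact: h. Qed.

Lemma tauC G H : dp G -> dp H -> tau G H = tau H G.
Proof. by case: htau => _ h *; exact: h. Qed.

Lemma tauA G H K : dp G -> dp H -> dp K -> tau G (tau H K) = tau (tau G H) K.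
Proof. by case: htau => _ _ h *; exact: h. Qed.

Lemma tau0r G : dp G -> tau G (eps 0) = G.
Proof. by case: htau => _ _ _ _ h *; exact: h. Qed.

Lemma tau0l G : dp G -> tau (eps 0) G = G.
Proof. by move=> hG; rewrite tauC ?tau0r //; exact: delta_plus_eps0. Qed.

Lemma tau_le G G' H H' : dp G -> dp G' -> dp H -> dp H' ->
  dle G G' -> dle H H' -> dle (tau G H) (tau G' H').
Proof.
move=> hG hG' hH hH' GG' HH' x; case: htau => _ _ _ hm _.
apply: (@le_trans _ _ (tau G' H x)); first by have [+ _] := hm G G' H hG hG' hH GG'.
by have [_ +] := hm H H' G' hH hH' hG' HH'.
Qed.

Lemma tauACA G H K L : dp G -> dp H -> dp K -> dp L ->
  tau (tau G H) (tau K L) = tau (tau G K) (tau H L).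
Proof.
move=> hG hH hK hL.
rewrite -(tauA hG hH (delta_plus_tau hK hL)) (tauA hH hK hL) (tauC hH hK).
by rewrite -(tauA hK hH hL) (tauA hG hK (delta_plus_tau hH hL)).
Qed.

Lemma delta_plus_gamma A : S A -> dp (gamma A).
Proof. by case: hgam => h *; exact: h. Qed.

Local Hint Resolve delta_plus_eps0 delta_plus_dscal delta_plus_tau
  delta_plus_gamma sigma_ringI sigma_ringD : core.

Lemma gamma_eq0 A : A = set0 -> gamma A = eps 0.
Proof. by move=> ->; case: hgam. Qed.

Lemma gamma_split A B : S A -> S B ->
  gamma A = tau (gamma (A `&` B)) (gamma (A `\` B)).
Proof.
move=> hA hB; case: hgam => _ _ hadd.
rewrite -hadd ?setUIDK //; auto.
by rewrite -subset0 => w [[_ Bw] [_]].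
Qed.

Lemma sint_cons E x A s :
  sint E ((x, A) :: s) = tau (dscal x (gamma (E `&` A))) (sint E s).
Proof. by []. Qed.

Lemma delta_plus_sint E s : S E -> srep s -> dp (sint E s).
Proof.
move=> hE; elim: s => [_|[x A] s IH /simple_rep_cons [x0 hA _ hs]].
  exact: delta_plus_eps0.
rewrite sint_cons; auto.
Qed.

Local Hint Resolve delta_plus_sint : core.

Lemma sint_eq_eps0 E s : srep s -> (forall p, p \in s -> E `&` p.2 = set0) ->
  sint E s = eps 0.
Proof.
elim: s => [|[x A] s IH] // /simple_rep_cons [x0 _ _ hs] hE.
rewrite sint_cons IH => [|//|p hp]; last by apply: hE; rewrite in_cons hp orbT.
by rewrite gamma_eq0 ?dscal_eps0 ?tau0r //; exact: (hE (x, A) (mem_head _ _)).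
Qed.

Lemma sint_split E B s : S E -> S B -> srep s ->
  sint E s = tau (sint (E `&` B) s) (sint (E `\` B) s).
Proof.
move=> hE hB; elim: s => [_|[x A] s IH /simple_rep_cons [x0 hA _ hs]].
  by symmetry; apply: tau0r; exact: delta_plus_eps0.
rewrite !sint_cons IH //.
have hEA : S (E `&` A) by exact: sigma_ringI.
rewrite (gamma_split hEA hB) hdist //; auto.
by rewrite [E `&` A `&` B]setIAC -setIDA -setIDAC tauACA; auto.
Qed.

Lemma sint_cons_setI E x A s : S E -> srep ((x, A) :: s) ->
  sint (E `&` A) ((x, A) :: s) = dscal x (gamma (E `&` A)).
Proof.
move=> hE hxs; have /simple_rep_cons [x0 hA hdisj hs] := hxs.
rewrite sint_cons sint_eq_eps0 // => [|p hp].
  by rewrite -setIA setIid tau0r; auto.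
by rewrite -subset0 => w [[_ Aw] pw]; rewrite -(hdisj p hp).
Qed.

Lemma sint_cons_setD E x A s : S E -> srep ((x, A) :: s) ->
  sint (E `\` A) ((x, A) :: s) = sint (E `\` A) s.
Proof.
move=> hE /simple_rep_cons [x0 hA _ hs].
rewrite sint_cons gamma_eq0; last by rewrite -subset0 => w [[]].
by rewrite dscal_eps0 // tau0l; auto.
Qed.

Lemma sint_le_dscal F t x : S F -> srep t -> 0 <= x ->
  (forall w, F w -> (x%:E <= sfval t w)%E) -> dle (sint F t) (dscal x (gamma F)).
Proof.
elim: t F => [|[y B] t IH] F hF ht x0 hx.
  have [[w Fw]|nF] := pselect (exists w, F w).
    move: (hx w Fw); rewrite sfval_nil lee_fin => x_le0.
    by rewrite (@le_anti _ _ x 0) ?x_le0 // dscal0.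
  by rewrite gamma_eq0 ?dscal_eps0 // -subset0 => w Fw; apply: nF; exists w.
have /simple_rep_cons [y0 hB _ hs] := ht.
rewrite (sint_split hF hB ht) (gamma_split hF hB) hdist //; auto.
apply: tau_le; auto.
- rewrite sint_cons_setI //; have [[w [Fw Bw]]|nF] := pselect (exists w, (F `&` B) w).
    by apply: dle_dscal; rewrite -?lee_fin -?(sfval_cons_in ht Bw) ?hx; auto.
  by rewrite gamma_eq0 ?dscal_eps0 // -subset0 => w FBw; apply: nF; exists w.
- rewrite sint_cons_setD //; apply: IH; auto => w [Fw Bw].
  by rewrite -(sfval_cons_notin y t Bw) hx.
Qed.

Lemma le_sint E s t : S E -> srep s -> srep t ->
  (forall w, E w -> (sfval s w <= sfval t w)%E) -> dle (sint E t) (sint E s).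
Proof.
elim: s E => [|[x A] s IH] E hE hs ht st; first by apply: dle_eps0; auto.
have /simple_rep_cons [x0 hA _ hs'] := hs.
rewrite (sint_split hE hA ht) (sint_split hE hA hs).
apply: tau_le; auto.
- rewrite sint_cons_setI //; apply: sint_le_dscal; auto => w [Ew Aw].
  by rewrite -(sfval_cons_in hs Aw) st.
- rewrite sint_cons_setD //; apply: IH; auto => w [Ew Aw].
  by rewrite -(sfval_cons_notin x s Aw) st.
Qed.

End Integral.

Section Staircase.
Variable f : Omega -> \bar R.
Hypotheses (f_ge0 : forall w, (0 <= f w)%E) (f_meas : measurable_fn S f).

Lemma measurable_fn_gt b : 0 <= b -> S [set w | (b%:E < f w)%E].
Proof.
move=> b0; have [sn [hsn hcv]] := f_meas.
pose c k := b + k.+1%:R^-1.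
have c_ge0 k : 0 <= c k by rewrite addr_ge0 ?invr_ge0.
suff -> : [set w | (b%:E < f w)%E] =
    \bigcup_k \bigcup_N \bigcap_n [set w | ((c k)%:E < sfval (sn (N + n)%N) w)%E].
  do 2 apply: sigma_ring_bigcup => ?; apply: sigma_ring_bigcap => n.
  exact: sigma_ring_sfval_gt.
apply/seteqP; split=> w /=.
- move=> bf; have [k ckf] : exists k, ((c k)%:E < f w)%E.
    move: bf; case: (f w) => [r| |] //; last by exists 0%N; rewrite ltry.
    by rewrite lte_fin => /ltr_add_invr [k hk]; exists k; rewrite lte_fin.
  have [N _ hN] : \forall n \near \oo, ((c k)%:E < sfval (sn n) w)%E.
    exact: (hcv w _ (open_ereal_gt' ckf)).
  by exists k => //; exists N => // n _; apply: hN; rewrite /= leq_addr.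
- move=> [k _ [N _ hN]]; apply: (@lt_le_trans _ _ (c k)%:E).
    by rewrite lte_fin ltrDl invr_gt0.
  apply: (cvge_to_ge (hcv w)); exists N => // n /= Nn.
  by have := hN (n - N)%N I; rewrite subnKC // => /ltW.
Qed.

Lemma measurable_fn_ge a : 0 < a -> S [set w | (a%:E <= f w)%E].
Proof.
move=> a0; suff -> : [set w | (a%:E <= f w)%E] =
    \bigcap_k [set w | ((Num.max 0 (a - k.+1%:R^-1))%:E < f w)%E].
  by apply: sigma_ring_bigcap => k; apply: measurable_fn_gt; rewrite le_max lexx.
apply/seteqP; split=> w /=.
  move=> af k _ /=; apply: lt_le_trans af; rewrite lte_fin gt_max a0 /=.
  by rewrite ltrBlDr ltrDl invr_gt0.
move=> h; have {}h k : ((Num.max 0 (a - k.+1%:R^-1))%:E < f w)%E := h k I.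
rewrite leNgt; apply/negP; move: h (f_ge0 w); case: (f w) => [r| |] // h _ ra.
have [k hk] : exists k, r + k.+1%:R^-1 < a by apply: ltr_add_invr; rewrite -lte_fin.
by have := h k; rewrite lte_fin gt_max => /andP[_]; rewrite ltrBlDr ltNge (ltW hk).
Qed.

Definition superlevel (v : R) := [set w | (v%:E <= f w)%E].

Definition staircase_rep (V : seq R) : seq (R * set Omega) :=
  foldr (fun v s => (v, superlevel v) :: map (fun p => (p.1, p.2 `\` superlevel v)) s)
    [::] V.

Definition staircase (V : seq R) (w : Omega) : R :=
  foldr (fun v y => if (v%:E <= f w)%E then v else y) 0 V.

Lemma simple_rep_staircase V : (forall v, v \in V -> 0 < v) -> srep (staircase_rep V).
Proof.
elim: V => [|v V IH] hV /=; first exact: simple_rep_nil.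
have v0 : 0 < v by apply: hV; rewrite mem_head.
have hv : S (superlevel v) by exact: measurable_fn_ge.
apply/simple_rep_cons; split; rewrite ?ltW //.
- by move=> _ /mapP[q _ ->] /=; rewrite -subset0 => w [? []].
- by apply: simple_rep_map_setD => //; apply: IH => u hu; rewrite hV // in_cons hu orbT.
Qed.

Lemma sfval_staircase V w : sfval (staircase_rep V) w = (staircase V w)%:E.
Proof.
elim: V => [|v V IH] /=; first exact: sfval_nil.
case: ifP => vf.
  rewrite sfval_cons sfval_eq0 ?indicE ?mem_set ?mulr1 ?adde0 //.
  by move=> _ /mapP[q _ ->] /= [].
by rewrite sfval_cons_notin ?sfval_map_setD // /superlevel /= vf.
Qed.

Lemma staircase_le V w : ((staircase V w)%:E <= f w)%E.
Proof. by elim: V => [|v V IH] /=; [exact: f_ge0 | case: ifP]. Qed.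

Lemma staircaseP V w : staircase V w = 0 \/ staircase V w \in V.
Proof.
elim: V => [|v V IH] /=; first by left.
case: ifP => _; first by right; rewrite mem_head.
by case: IH => [->|h]; [left | right; rewrite in_cons h orbT].
Qed.

Lemma staircase_ge0 V w : (forall v, v \in V -> 0 < v) -> 0 <= staircase V w.
Proof. by move=> V0; case: (staircaseP V w) => [->//|/V0/ltW]. Qed.

Lemma staircase_ge V w v : sorted >=%R V -> v \in V -> (v%:E <= f w)%E ->
  v <= staircase V w.
Proof.
elim: V => [|u V IH] //= hs; rewrite in_cons => /predU1P[-> ->//|vV vf].
have /allP uV : all (>=%R u) V by apply: (order_path_min ge_trans).
by case: ifP => _; [exact: uV | exact/IH/vf/vV/(path_sorted hs)].
Qed.

Lemma staircase_subset V W w : (forall v, v \in W -> 0 < v) -> sorted >=%R W ->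
  {subset V <= W} -> staircase V w <= staircase W w.
Proof.
move=> W0 hW VW; have [->|hV] := staircaseP V w; first exact: staircase_ge0.
by apply: staircase_ge; [| exact: VW | exact: staircase_le].
Qed.

Section Approximation.
Variables (tau : dfun R -> dfun R -> dfun R) (gamma : set Omega -> dfun R)
  (E : set Omega).
Hypotheses (htau : triangle_function tau) (hdist : distributive_tf tau)
  (hgam : tau_decomposable tau S gamma) (hE : S E).
Local Notation SfE := (@SfE R Omega S f E).
Local Notation sint := (@sint R Omega tau gamma E).
Local Notation pinf := (@pinf R Omega tau S gamma f E).
Local Notation tf := (@tf_integral R Omega tau S gamma f E).

Lemma delta_plus_SfE s : SfE s -> delta_plus (sint s).
Proof. by case=> hs _; exact: delta_plus_sint. Qed.

Lemma SfE_nil : SfE [::].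
Proof. by split=> [|w _]; rewrite ?sfval_nil //; exact: simple_rep_nil. Qed.

Lemma sint_set_neq0 x : [set sint s x | s in SfE] !=set0.
Proof. by exists (sint [::] x), [::] => //; exact: SfE_nil. Qed.

Lemma has_lbound_sint x : has_lbound [set sint s x | s in SfE].
Proof. by exists 0 => _ [s hs <-]; exact/delta_plus_ge0/delta_plus_SfE. Qed.

Lemma pinf_le_sint s x : SfE s -> pinf x <= sint s x.
Proof. by move=> hs; apply: ge_inf; [exact: has_lbound_sint | exists s]. Qed.

Lemma pinf_le1 x : pinf x <= 1.
Proof.
apply: le_trans (pinf_le_sint x SfE_nil) _.
exact/delta_plus_le1/delta_plus_SfE/SfE_nil.
Qed.

Lemma pinf_nondecreasing x y : (x <= y)%E -> pinf x <= pinf y.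
Proof.
move=> xy; apply: lb_le_inf; first exact: sint_set_neq0.
move=> _ [s hs <-]; apply: le_trans (pinf_le_sint x hs) _.
exact/delta_plus_nondecreasing/xy/delta_plus_SfE.
Qed.

Lemma tf_integral_le_pinf x : tf x%:E <= pinf x%:E.
Proof.
apply: ge_sup; first by exists (pinf (x - 1)%:E), (x - 1) => //=; rewrite gtrBl.
by move=> _ [y /= yx <-]; apply: pinf_nondecreasing; rewrite lee_fin ltW.
Qed.

Lemma pinf_le_tf_integral y x : y < x -> pinf y%:E <= tf x%:E.
Proof.
move=> yx; apply: ub_le_sup; last by exists y.
by exists 1 => _ [z _ <-]; exact: pinf_le1.
Qed.

Lemma exists_approx y (m : nat) :
  exists s, SfE s /\ sint s y%:E < pinf y%:E + m.+1%:R^-1.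
Proof.
have m0 : 0 < m.+1%:R^-1 :> R by rewrite invr_gt0.
have [_ [s hs <-] hlt] :=
  inf_adherent m0 (conj (sint_set_neq0 y%:E) (has_lbound_sint y%:E)).
by exists s.
Qed.

Definition approx y m := proj1_sig (cid (exists_approx y m)).

Lemma approxP y m :
  SfE (approx y m) /\ sint (approx y m) y%:E < pinf y%:E + m.+1%:R^-1.
Proof. exact: proj2_sig (cid (exists_approx y m)). Qed.

Definition approx_enum k : seq (R * set Omega) :=
  if @unpickle (rat * nat)%type k is Some (q, m) then approx (ratr q) m else [::].

Definition rat_enum k : R := if @unpickle rat k is Some q then ratr q else 0.

Fixpoint candidates n : seq R :=
  if n is k.+1 then rat_enum k :: map fst (approx_enum k) ++ candidates k else [::].

Definition heights n := sort >=%R [seq v <- candidates n | 0 < v].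

Definition approximant n := staircase_rep (heights n).

Lemma SfE_approx_enum k : SfE (approx_enum k).
Proof.
rewrite /approx_enum; case: unpickle => [[q m]|]; last exact: SfE_nil.
by case: (approxP (ratr q) m).
Qed.

Lemma mem_heights n v : (v \in heights n) = (0 < v) && (v \in candidates n).
Proof. by rewrite mem_sort mem_filter. Qed.

Lemma heights_gt0 n v : v \in heights n -> 0 < v.
Proof. by rewrite mem_heights => /andP[]. Qed.

Lemma sorted_heights n : sorted >=%R (heights n).
Proof. by apply: sort_sorted => x y; exact: le_total. Qed.

Lemma candidates_subset m n : (m <= n)%N -> {subset candidates m <= candidates n}.
Proof.
elim: n => [|n IH]; first by rewrite leqn0 => /eqP ->.
rewrite leq_eqVlt => /predU1P[-> //|mn v vm].
by rewrite /= in_cons mem_cat IH ?orbT.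
Qed.

Lemma heights_subset m n : (m <= n)%N -> {subset heights m <= heights n}.
Proof.
by move=> mn v; rewrite !mem_heights => /andP[-> /(candidates_subset mn)].
Qed.

Lemma SfE_approximant n : SfE (approximant n).
Proof.
split; first by apply: simple_rep_staircase => v; exact: heights_gt0.
by move=> w _; rewrite sfval_staircase staircase_le.
Qed.

Lemma approximant_nondecreasing n w :
  (sfval (approximant n) w <= sfval (approximant n.+1) w)%E.
Proof.
rewrite !sfval_staircase lee_fin staircase_subset ?sorted_heights //.
  by move=> v; exact: heights_gt0.
exact: heights_subset.
Qed.

Lemma approx_enum_le_approximant k n w : (k < n)%N -> E w ->
  (sfval (approx_enum k) w <= sfval (approximant n) w)%E.
Proof.
move=> kn Ew; have [hs hle] := SfE_approx_enum k.
have st0 := staircase_ge0 w (@heights_gt0 n).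
rewrite sfval_staircase; case: (sfvalP w hs) => [[_ ->]|[p [hp pw hsp]]] //.
rewrite hsp lee_fin; have [->//|p_neq0] := eqVneq p.1 0.
have p_ge0 : 0 <= p.1 by case: hs => /(_ p hp).
apply: staircase_ge; first exact: sorted_heights.
  rewrite mem_heights lt0r p_neq0 p_ge0 /=; apply: (candidates_subset kn).
  by rewrite /= in_cons mem_cat map_f ?orbT.
by rewrite -hsp hle.
Qed.

Lemma approximant_eventually_gt w a : (a%:E < f w)%E ->
  exists N, forall n, (N <= n)%N -> a < staircase (heights n) w.
Proof.
move=> af; have [a0|a0] := ltP a 0.
  by exists 0%N => n _; exact/(lt_le_trans a0)/staircase_ge0/heights_gt0.
have [b [ab bf]] : exists b, a < b /\ (b%:E <= f w)%E.
  move: af; case: (f w) => [r| |] //; first by rewrite lte_fin => ar; exists r.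
  by move=> _; exists (a + 1); rewrite ltrDl ltr01 leey.
have [q] := rat_in_itvoo ab; rewrite in_itv /= => /andP[aq qb].
exists (pickle q).+1 => n qn; apply: (lt_le_trans aq); apply: staircase_ge.
- exact: sorted_heights.
- rewrite mem_heights (le_lt_trans a0 aq) /=; apply: (candidates_subset qn).
  by rewrite /= /rat_enum pickleK mem_head.
- by apply: le_trans bf; rewrite lee_fin ltW.
Qed.

Lemma approximant_cvg w : (fun n => sfval (approximant n) w) @ \oo --> f w.
Proof.
have -> : (fun n => sfval (approximant n) w) = (fun n => (staircase (heights n) w)%:E).
  by apply: funext => n; exact: sfval_staircase.
have hle n := staircase_le (heights n) w.
move: (f_ge0 w) hle (@approximant_eventually_gt w); case: (f w) => [r| |] // _ hle hgt.
- apply: cvg_EFin; first exact: nearW.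
  apply/cvgrPdist_lt => e e0.
  have /hgt[N hN] : ((r - e)%:E < r%:E)%E by rewrite lte_fin gtrBl.
  exists N => // n /= Nn; have := hN n Nn; have := hle n; rewrite lee_fin => h1 h2.
  by rewrite ger0_norm ?subr_ge0 //; lra.
- apply/cvgeyPgt => A; have [N hN] := hgt A (ltry _).
  by exists N => // n /= Nn; rewrite lte_fin hN.
Qed.

Lemma tf_integral_le_sint_approximant n x : tf x%:E <= sint (approximant n) x%:E.
Proof. exact/(le_trans (tf_integral_le_pinf x))/pinf_le_sint/SfE_approximant. Qed.

Lemma sint_approximant_lt q m n x : x <= ratr q -> (pickle (q, m) < n)%N ->
  sint (approximant n) x%:E < pinf (ratr q)%:E + m.+1%:R^-1.
Proof.
move=> xq qmn; have [hs _] := SfE_approximant n.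
have [[ht _] lt_approx] : SfE (approx_enum (pickle (q, m))) /\
    sint (approx_enum (pickle (q, m))) (ratr q)%:E < pinf (ratr q)%:E + m.+1%:R^-1.
  by rewrite /approx_enum pickleK; exact: approxP.
apply: le_lt_trans lt_approx; apply: (@le_trans _ _ (sint (approximant n) (ratr q)%:E)).
  exact/delta_plus_nondecreasing/xq/delta_plus_SfE/SfE_approximant.
apply: (le_sint htau hdist hgam hE ht hs) => w Ew.
exact: approx_enum_le_approximant.
Qed.

Lemma approximant_wconv : wconv (fun n => sint (approximant n)) tf.
Proof.
move=> x /cvgrPdist_lt tf_cont; apply/cvgrPdist_lt => e e0.
have e2 : 0 < e / 2 by rewrite divr_gt0.
have /nbhs_ballP[d /= d0 hd] := tf_cont _ e2.
have [q] := rat_in_itvoo (ltr_pwDr d0 (lexx x)); rewrite in_itv /= => /andP[xq qd].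
have [m hm] := ltr_add_invr e2; rewrite add0r in hm.
pose z := (ratr q + (x + d)) / 2.
have tf_z : tf z%:E < tf x%:E + e / 2.
  have /hd : ball x d z by rewrite -ball_normE /= distrC ger0_norm /z; lra.
  by rewrite /= ltr_norml => /andP[+ _]; lra.
have pinf_q : pinf (ratr q)%:E <= tf z%:E.
  by apply: pinf_le_tf_integral; rewrite /z; lra.
exists (pickle (q, m)).+1 => // n qmn.
rewrite distrC ger0_norm ?subr_ge0 ?tf_integral_le_sint_approximant // ltrBlDl.
change (sint (approximant n) x%:E < tf x%:E + e).
apply: (lt_le_trans (sint_approximant_lt (ltW xq) qmn)).
apply: (le_trans (lerD pinf_q (ltW hm))).
by rewrite [in leRHS](splitr e) addrA lerD2r ltW.
Qed.

End Approximation.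
End Staircase.
End SimpleFunctions.

Theorem theorem5p2 (R : realType) (Omega : Type)
  (tau : dfun R -> dfun R -> dfun R) (S : set (set Omega))
  (gamma : set Omega -> dfun R) (f : Omega -> \bar R) (E : set Omega) :
  triangle_function tau -> continuous_tf tau -> distributive_tf tau ->
  (exists w : Omega, True) ->
  sigma_ring_of S ->
  tau_decomposable tau S gamma -> cont_from_below S gamma ->
  (forall w, (0 <= f w)%E) ->
  measurable_fn S f ->
  S E ->
  gamma_integrable tau S gamma f E ->
  exists fn : nat -> seq (R * set Omega),
    [/\ (forall n, SfE S f E (fn n)),
        (forall n w, (sfval (fn n) w <= sfval (fn n.+1) w)%E),
        (forall w, (fun n => sfval (fn n) w) @ \oo --> f w) &
        wconv (fun n => sint tau gamma E (fn n)) (tf_integral tau S gamma f E)].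
Proof.
move=> htau _ hdist _ hS hgam _ f_ge0 f_meas hE _.
exists (approximant hS f_ge0 htau hgam hE); split.
- exact: SfE_approximant.
- exact: approximant_nondecreasing.
- exact: approximant_cvg.
- exact: approximant_wconv.
Qed.
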